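(* Let $\tilde f$ satisfy (H1), (H2) and (H3). For every real $M>0$ there exists $n_0\in\mathbb{N}$ such that for every compact set $\tilde K\subset\tilde A_0$ with $\mathrm{diam}\,p_1(\tilde K)\le M$ and every integer $n$ with $|n|\ge n_0$, we have $\tilde f^n(\tilde K)\cap\tilde K=\emptyset$.
   Context: Let $\tilde f$ be a homeomorphism of $\mathbb{R}^2$ isotopic to the identity and commuting with $T(x,y)=(x+1,y)$; $p_1$ is the first coordinate projection. For a horizontal line $\Gamma$, $U^+_\Gamma$ and $U^-_\Gamma$ denote the open half-planes above and below $\Gamma$. Hypotheses: (H1) $\Gamma_0,\Gamma_1,\Gamma_2$ are horizontal lines with $\Gamma_0\subset U^+_{\Gamma_1}$, $\Gamma_1\subset U^+_{\Gamma_2}$, and $\tilde f(\Gamma_j)\subset U^-_{\Gamma_j}$ for $j=0,1,2$; (H2) $\tilde f^n(\Gamma_0)\cap\Gamma_2\ne\emptyset$ for every integer $n\ge1$; (H3) for $i\in\{0,1\}$, letting $\tilde A_i$ be the closed band between $\Gamma_i$ and $\Gamma_{i+1}$, the sets $\Theta(\tilde A_0),\Theta(\tilde A_1)$ are non-empty and $\rho_{\Theta(\tilde A_0)}(\tilde f)\subset(0,+\infty)$, $\rho_{\Theta(\tilde A_1)}(\tilde f)\subset(-\infty,0)$. Here $\Theta(\tilde E)=\{x\in\tilde E:\tilde f^n(x)\in\tilde E\ \forall n\in\mathbb{Z}\}$, and for a closed $T$-invariant set $\tilde E$ contained in a horizontal band, $\rho_{\tilde E}(\tilde f)=\bigcap_{m\ge1}\mathrm{Cl}\big(\bigcup_{n\ge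 m}\{\frac1n(p_1(\tilde f^n(\tilde z))-p_1(\tilde z)): \tilde z\in\tilde E,\ \tilde f^n(\tilde z)\in\tilde E\}\big)$, closure in $\overline{\mathbb{R}}=\mathbb{R}\cup\{\pm\infty\}$. *)

From Stdlib Require Import Reals ZArith List.
Open Scope R_scope.

Definition pt : Type := (R * R)%type.

(* The max-metric on R^2 (induces the usual topology). *)
Definition dist2 (z w : pt) : R :=
  Rmax (Rabs (fst z - fst w)) (Rabs (snd z - snd w)).

Definition continuous2 (f : pt -> pt) : Prop :=
  forall z eps, 0 < eps -> exists delta, 0 < delta /\
    forall w, dist2 z w < delta -> dist2 (f z) (f w) < eps.

Definition is_homeo (f : pt -> pt) : Prop :=
  continuous2 f /\ exists g : pt -> pt, continuous2 g /\
    (forall z, g (f z) = z) /\ (forall z, f (g z) = z).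

Definition isotopic_to_id (f : pt -> pt) : Prop :=
  exists H : R -> pt -> pt,
    (forall t z eps, 0 <= t <= 1 -> 0 < eps -> exists delta, 0 < delta /\
       forall s w, 0 <= s <= 1 -> Rabs (t - s) < delta -> dist2 z w < delta ->
         dist2 (H t z) (H s w) < eps) /\
    (forall t, 0 <= t <= 1 -> is_homeo (H t)) /\
    (forall z, H 0 z = z) /\ (forall z, H 1 z = f z).

Definition T (z : pt) : pt := (fst z + 1, snd z).

Definition p1 (z : pt) : R := fst z.

Definition fpow (f finv : pt -> pt) (n : Z) (z : pt) : pt :=
  match n with
  | Z0 => z
  | Zpos p => Nat.iter (Pos.to_nat p) f z
  | Zneg p => Nat.iter (Pos.to_nat p) finv z
  end.

Definition hline (c : R) (z : pt) : Prop := snd z = c.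
Definition Uplus (c : R) (z : pt) : Prop := c < snd z.
Definition Uminus (c : R) (z : pt) : Prop := snd z < c.

Definition band (chi clo : R) (z : pt) : Prop := clo <= snd z <= chi.

Definition Theta (f finv : pt -> pt) (E : pt -> Prop) (z : pt) : Prop :=
  E z /\ forall n : Z, E (fpow f finv n z).

Inductive ERbar : Type := Fin (r : R) | PInf | MInf.

Definition in_closure (v : ERbar) (S : R -> Prop) : Prop :=
  match v with
  | Fin a => forall eps, 0 < eps -> exists r, S r /\ Rabs (r - a) < eps
  | PInf => forall B, exists r, S r /\ B < r
  | MInf => forall B, exists r, S r /\ r < B
  end.

Definition rot_set (f finv : pt -> pt) (E : pt -> Prop) (v : ERbar) : Prop :=
  forall m : nat, (1 <= m)%nat ->
    in_closure v (fun r => exists (n : nat) (z : pt),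
      (m <= n)%nat /\ E z /\ E (fpow f finv (Z.of_nat n) z) /\
      r = (p1 (fpow f finv (Z.of_nat n) z) - p1 z) / INR n).

Definition open2 (U : pt -> Prop) : Prop :=
  forall z, U z -> exists eps, 0 < eps /\ forall w, dist2 z w < eps -> U w.

Definition compact2 (K : pt -> Prop) : Prop :=
  forall (I : Type) (U : I -> pt -> Prop),
    (forall i, open2 (U i)) -> (forall z, K z -> exists i, U i z) ->
    exists l : list I, forall z, K z -> exists i, In i l /\ U i z.

From Stdlib Require Import Reals ZArith List Lra Lia Classical ClassicalEpsilon.
Open Scope R_scope.

(* A homeomorphism that pushes a horizontal line below itself maps one of the two
   open half-planes bounded by the line below it; (H1) and (H3) rule out the wrong
   alternative at the lines y = c0 and y = c1, so f maps the closed half-planes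
   below them strictly into themselves and an orbit segment with both ends in the
   band A0 stays in A0.  Positivity of the rotation set of Theta(A0) yields N with
   drift > 1 over N steps on Theta(A0); by compactness of A0 modulo T the drift
   over N steps stays > 1/2 at points whose orbit remains in A0 for L steps on both
   sides.  Summing over consecutive blocks, long orbit segments from A0 to A0 move
   to the right by more than any M, which is incompatible with p1(K) having
   diameter <= M.  Only (H1) at c0, c1 and (H3) for A0 are needed, and K need not
   be compact. *)

Definition continuousR (F : pt -> R) : Prop :=
  forall z eps, 0 < eps -> exists delta, 0 < delta /\
    forall w, dist2 z w < delta -> Rabs (F z - F w) < eps.

Lemma dist2_fst z w : Rabs (fst z - fst w) <= dist2 z w.
Proof. apply Rmax_l. Qed.

Lemma dist2_snd z w : Rabs (snd z - snd w) <= dist2 z w.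
Proof. apply Rmax_r. Qed.

Lemma dist2_lt z w d :
  Rabs (fst z - fst w) < d -> Rabs (snd z - snd w) < d -> dist2 z w < d.
Proof. intros; apply Rmax_lub_lt; assumption. Qed.

Lemma dist2_sym z w : dist2 z w = dist2 w z.
Proof. unfold dist2; rewrite (Rabs_minus_sym (fst z)), (Rabs_minus_sym (snd z)); reflexivity. Qed.

Lemma continuousR_fst : continuousR fst.
Proof.
  intros z e He; exists e; split; [exact He|]; intros w Hw; pose proof (dist2_fst z w); lra.
Qed.

Lemma continuousR_snd : continuousR snd.
Proof.
  intros z e He; exists e; split; [exact He|]; intros w Hw; pose proof (dist2_snd z w); lra.
Qed.

Lemma continuousR_comp F g : continuousR F -> continuous2 g -> continuousR (fun z => F (g z)).
Proof.
  intros HF Hg z e He. destruct (HF (g z) e He) as [d1 [Hd1 H1]].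
  destruct (Hg z d1 Hd1) as [d2 [Hd2 H2]]. exists d2; split; auto.
Qed.

Lemma continuousR_minus F G : continuousR F -> continuousR G -> continuousR (fun z => F z - G z).
Proof.
  intros HF HG z e He.
  destruct (HF z (e/2)) as [d1 [Hd1 H1]]; [lra|].
  destruct (HG z (e/2)) as [d2 [Hd2 H2]]; [lra|].
  exists (Rmin d1 d2); split; [now apply Rmin_pos|].
  intros w Hw. pose proof (Rmin_l d1 d2); pose proof (Rmin_r d1 d2).
  specialize (H1 w ltac:(lra)); specialize (H2 w ltac:(lra)).
  replace (F z - G z - (F w - G w)) with ((F z - F w) - (G z - G w)) by ring.
  eapply Rle_lt_trans; [apply Rabs_triang|]. rewrite Rabs_Ropp. lra.
Qed.

Lemma continuousR_const a : continuousR (fun _ => a).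
Proof. intros z e He; exists 1; split; [lra|]; intros; rewrite Rminus_diag, Rabs_R0; exact He. Qed.

Lemma continuous2_comp g h : continuous2 g -> continuous2 h -> continuous2 (fun z => g (h z)).
Proof.
  intros Hg Hh z e He. destruct (Hg (h z) e He) as [d1 [Hd1 H1]].
  destruct (Hh z d1 Hd1) as [d2 [Hd2 H2]]. exists d2; split; auto.
Qed.

Lemma continuous2_iter g k : continuous2 g -> continuous2 (Nat.iter k g).
Proof.
  intros Hg; induction k as [|k IH]; simpl.
  - intros z e He; exists e; split; auto.
  - exact (continuous2_comp g _ Hg IH).
Qed.

Definition segment (p q : pt) (t : R) : pt :=
  (fst p + t * (fst q - fst p), snd p + t * (snd q - snd p)).

Lemma segment_0 p q : segment p q 0 = p.
Proof. unfold segment; rewrite !Rmult_0_l, !Rplus_0_r; destruct p; reflexivity. Qed.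

Lemma segment_1 p q : segment p q 1 = q.
Proof. unfold segment; destruct q; simpl; f_equal; ring. Qed.

Lemma dist2_segment p q s t :
  dist2 (segment p q s) (segment p q t) = Rabs (s - t) * dist2 p q.
Proof.
  unfold dist2, segment; simpl.
  replace (fst p + s * (fst q - fst p) - (fst p + t * (fst q - fst p)))
    with ((s - t) * - (fst p - fst q)) by ring.
  replace (snd p + s * (snd q - snd p) - (snd p + t * (snd q - snd p)))
    with ((s - t) * - (snd p - snd q)) by ring.
  rewrite !Rabs_mult, !Rabs_Ropp, RmaxRmult; [reflexivity | apply Rabs_pos].
Qed.

Lemma continuity_segment F p q : continuousR F -> continuity (fun t => F (segment p q t)).
Proof.
  intros HF t e He. destruct (HF (segment p q t) e He) as [d [Hd H]].
  exists (d / (1 + dist2 p q)).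
  assert (Hpq : 0 <= dist2 p q) by (eapply Rle_trans; [apply Rabs_pos | apply dist2_fst]).
  split; [apply Rdiv_lt_0_compat; lra|].
  intros s [_ Hs]. simpl in *. unfold Rdist in *.
  rewrite Rabs_minus_sym. apply H. rewrite dist2_segment, Rabs_minus_sym.
  apply (Rmult_lt_compat_r (1 + dist2 p q)) in Hs; [|lra].
  unfold Rdiv in Hs; rewrite Rmult_assoc, Rinv_l in Hs; [|lra].
  pose proof (Rabs_pos (s - t)). nra.
Qed.

Lemma segment_IVT F p q c : continuousR F -> (F p - c) * (F q - c) <= 0 ->
  exists t, 0 <= t <= 1 /\ F (segment p q t) = c.
Proof.
  intros HF H.
  destruct (IVT_cor (fun t => F (segment p q t) - c) 0 1) as [t [Ht Hz]].
  - apply continuity_minus; [now apply continuity_segment | apply continuity_const; now intros ? ?].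
  - lra.
  - now rewrite segment_0, segment_1.
  - exists t; split; [exact Ht | lra].
Qed.

Section LineBelow.
Variables (g ginv : pt -> pt) (c : R).
Hypotheses (Hg : continuous2 g) (Hginv : continuous2 ginv).
Hypotheses (g_K : forall z, ginv (g z) = z) (ginv_K : forall z, g (ginv z) = z).
Hypothesis line_below : forall z, snd z = c -> snd (g z) < c.

Lemma preimage_of_line_same_side a0 : c <= snd (g a0) ->
  exists a, snd (g a) = c /\ 0 < (snd a - c) * (snd a0 - c).
Proof.
  intros Ha0. set (q := (fst a0, c)).
  assert (Hq : snd (g q) < c) by now apply line_below.
  destruct (segment_IVT (fun z => snd (g z)) a0 q c) as [t [Ht Hgt]].
  - exact (continuousR_comp _ _ continuousR_snd Hg).
  - simpl; nra.
  - exists (segment a0 q t); split; [exact Hgt|].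
    assert (Ht1 : t <> 1) by (intros ->; rewrite segment_1 in Hgt; lra).
    assert (Ha0c : snd a0 <> c) by (intro E; specialize (line_below a0 E); lra).
    assert (0 < (snd a0 - c) * (snd a0 - c))
      by (apply Rsqr_pos_lt; lra).
    unfold segment; simpl. nra.
Qed.

(* The preimage of the segment joining [g a] and [g b] inside the line would cross
   the line. *)
Lemma line_separates_preimages a b :
  snd a < c -> c < snd b -> snd (g a) = c -> snd (g b) = c -> False.
Proof.
  intros Ha Hb Hga Hgb.
  destruct (segment_IVT (fun z => snd (ginv z)) (g a) (g b) c) as [t [Ht Hp]].
  - exact (continuousR_comp _ _ continuousR_snd Hginv).
  - rewrite !g_K; nra.
  - specialize (line_below _ Hp). rewrite ginv_K in line_below.
    unfold segment in line_below; simpl in line_below. nra.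
Qed.

Lemma half_plane_below_or_above :
  (forall z, snd z < c -> snd (g z) < c) \/ (forall z, c < snd z -> snd (g z) < c).
Proof.
  destruct (classic (forall z, snd z < c -> snd (g z) < c)) as [Hbelow|Hbelow];
    [now left | right].
  intros b0 Hb0. apply Rnot_le_lt; intro Hgb0.
  apply Hbelow; intros a0 Ha0. apply Rnot_le_lt; intro Hga0.
  destruct (preimage_of_line_same_side a0 Hga0) as [a [Ha Hsa]].
  destruct (preimage_of_line_same_side b0 Hgb0) as [b [Hb Hsb]].
  apply (line_separates_preimages a b); [nra | nra | exact Ha | exact Hb].
Qed.

End LineBelow.

Section Iterates.
Variables f finv : pt -> pt.
Hypotheses (f_K : forall z, finv (f z) = z) (finv_K : forall z, f (finv z) = z).

Lemma fpow_nat n z : fpow f finv (Z.of_nat n) z = Nat.iter n f z.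
Proof. destruct n; simpl; [reflexivity|]. now rewrite SuccNat2Pos.id_succ. Qed.

Lemma fpow_opp_nat n z : fpow f finv (- Z.of_nat n) z = Nat.iter n finv z.
Proof. destruct n; simpl; [reflexivity|]. now rewrite SuccNat2Pos.id_succ. Qed.

Lemma fpow_succ n z : fpow f finv (n + 1) z = f (fpow f finv n z).
Proof.
  destruct (Z_le_gt_dec 0 n) as [Hn|Hn].
  - replace n with (Z.of_nat (Z.to_nat n)) by lia.
    replace (Z.of_nat (Z.to_nat n) + 1)%Z with (Z.of_nat (S (Z.to_nat n))) by lia.
    now rewrite !fpow_nat.
  - replace n with (- Z.of_nat (S (Z.to_nat (- n - 1))))%Z by lia.
    replace (- Z.of_nat (S (Z.to_nat (- n - 1))) + 1)%Z
      with (- Z.of_nat (Z.to_nat (- n - 1)))%Z by lia.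
    rewrite !fpow_opp_nat; simpl. now rewrite finv_K.
Qed.

Lemma fpow_pred n z : fpow f finv (n - 1) z = finv (fpow f finv n z).
Proof.
  replace n with ((n - 1) + 1)%Z at 2 by lia. now rewrite fpow_succ, f_K.
Qed.

Lemma fpow_add a b z : fpow f finv (a + b) z = fpow f finv a (fpow f finv b z).
Proof.
  revert z; induction a as [|a IH|a IH] using Z.peano_ind; intro z; [reflexivity| |].
  - replace (Z.succ a + b)%Z with ((a + b) + 1)%Z by lia.
    unfold Z.succ; now rewrite !fpow_succ, IH.
  - replace (Z.pred a + b)%Z with ((a + b) - 1)%Z by lia.
    rewrite <- Z.sub_1_r; now rewrite !fpow_pred, IH.
Qed.

End Iterates.

Definition Tk (k : Z) (z : pt) : pt := (fst z + IZR k, snd z).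

Lemma Tk_succ k z : Tk (Z.succ k) z = T (Tk k z).
Proof. unfold Tk, T; simpl; rewrite succ_IZR; f_equal; ring. Qed.

Lemma T_Tk_pred k z : T (Tk (Z.pred k) z) = Tk k z.
Proof. unfold Tk, T; simpl; unfold Z.pred; rewrite plus_IZR; f_equal; simpl; ring. Qed.

Lemma T_inj z w : T z = T w -> z = w.
Proof.
  destruct z, w; unfold T; simpl; intro E; injection E as E1 E2.
  f_equal; lra.
Qed.

Lemma Tk_equivariant g : (forall z, g (T z) = T (g z)) ->
  forall k z, g (Tk k z) = Tk k (g z).
Proof.
  intros HgT k; induction k as [|k IH|k IH] using Z.peano_ind; intro z.
  - unfold Tk; simpl; rewrite !Rplus_0_r, <- !surjective_pairing; reflexivity.
  - now rewrite !Tk_succ, HgT, IH.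
  - apply T_inj. now rewrite <- HgT, !T_Tk_pred, IH.
Qed.

(* [z |-> (fst z, F z)] commutes with [T] exactly when [F] is [T]-invariant. *)
Lemma Tk_invariant (F : pt -> R) : (forall z, F (T z) = F z) -> forall k z, F (Tk k z) = F z.
Proof.
  intros HFT k z.
  assert (HgT : forall z, (fst (T z), F (T z)) = T (fst z, F z))
    by (intro w; rewrite HFT; reflexivity).
  exact (f_equal snd (Tk_equivariant (fun w => (fst w, F w)) HgT k z)).
Qed.

Lemma Tk_normalize z : exists k, 0 <= fst (Tk k z) <= 1.
Proof.
  exists (1 - up (fst z))%Z. unfold Tk; cbn [fst snd]. rewrite minus_IZR.
  destruct (archimed (fst z)). lra.
Qed.

Lemma iter_T g : (forall z, g (T z) = T (g z)) ->
  forall n z, Nat.iter n g (T z) = T (Nat.iter n g z).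
Proof.
  intros HgT n; induction n as [|n IH]; intro z; simpl; [reflexivity|]. now rewrite IH, HgT.
Qed.

Lemma fpow_T f finv : (forall z, finv (f z) = z) -> (forall z, f (finv z) = z) ->
  (forall z, f (T z) = T (f z)) -> forall n z, fpow f finv n (T z) = T (fpow f finv n z).
Proof.
  intros f_K finv_K HfT n z.
  assert (HfinvT : forall z, finv (T z) = T (finv z))
    by (intro w; rewrite <- (f_K (T (finv w))), HfT, finv_K; reflexivity).
  destruct n; simpl; [reflexivity | now apply iter_T..].
Qed.

Definition cluster (u : nat -> pt) (w : pt) : Prop :=
  forall eps, 0 < eps -> forall N, exists p, (N <= p)%nat /\ dist2 (u p) w < eps.

Lemma ValAdh_eps un l : ValAdh un l -> forall eps, 0 < eps -> forall N,
  exists p, (N <= p)%nat /\ Rabs (un p - l) < eps.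
Proof.
  intros H e He N. destruct (H (disc l (mkposreal e He)) N) as [p [Hp Hv]].
  - exists (mkposreal e He); intros x Hx; exact Hx.
  - exists p; split; assumption.
Qed.

Lemma Rinv_INR_succ_lt eps : 0 < eps -> exists K, / (INR K + 1) < eps.
Proof.
  intros He. destruct (INR_unbounded (/ eps)) as [K HK]. exists K.
  rewrite <- (Rinv_inv eps). pose proof (pos_INR K).
  apply Rinv_lt_contravar; [apply Rmult_lt_0_compat|]; try lra.
  now apply Rinv_0_lt_compat.
Qed.

Lemma Rinv_INR_succ_le (k K : nat) : (K <= k)%nat -> / (INR k + 1) <= / (INR K + 1).
Proof.
  intros H. apply le_INR in H. pose proof (pos_INR K).
  apply Rinv_le_contravar; lra.
Qed.

Lemma cluster_exists (u : nat -> pt) a b c d :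
  (forall n, a <= fst (u n) <= b /\ c <= snd (u n) <= d) -> exists w, cluster u w.
Proof.
  intros Hb.
  destruct (Bolzano_Weierstrass (fun n => fst (u n)) _ (compact_P3 a b)) as [l1 Hl1];
    [intro n; apply Hb|].
  assert (Hval : forall k : nat, exists p, (k <= p)%nat /\ Rabs (fst (u p) - l1) < / (INR k + 1)).
  { intro k. apply (ValAdh_eps _ _ Hl1). apply Rinv_0_lt_compat. pose proof (pos_INR k); lra. }
  destruct (choice _ Hval) as [phi Hphi].
  destruct (Bolzano_Weierstrass (fun k => snd (u (phi k))) _ (compact_P3 c d)) as [l2 Hl2];
    [intro n; apply Hb|].
  exists (l1, l2). intros e He N.
  destruct (Rinv_INR_succ_lt e He) as [K HK].
  destruct (ValAdh_eps _ _ Hl2 e He (max N K)) as [k [Hk Hk2]].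
  exists (phi k). destruct (Hphi k) as [Hp1 Hp2]. split; [lia|].
  apply dist2_lt; simpl; [|exact Hk2].
  pose proof (Rinv_INR_succ_le k K ltac:(lia)). lra.
Qed.

Lemma cluster_le F u w a : continuousR F -> cluster u w ->
  (exists P0, forall p, (P0 <= p)%nat -> F (u p) <= a) -> F w <= a.
Proof.
  intros HF Hc [P0 HP]. apply Rnot_lt_le; intro H.
  destruct (HF w (F w - a)) as [d [Hd Hw]]; [lra|].
  destruct (Hc d Hd P0) as [p [Hp Hp2]]. rewrite dist2_sym in Hp2.
  specialize (Hw _ Hp2). specialize (HP p Hp).
  pose proof (Rle_abs (F w - F (u p))). lra.
Qed.

Lemma cluster_ge F u w a : continuousR F -> cluster u w ->
  (exists P0, forall p, (P0 <= p)%nat -> a <= F (u p)) -> a <= F w.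
Proof.
  intros HF Hc [P0 HP].
  enough (0 - F w <= 0 - a) by lra.
  apply (cluster_le (fun z => 0 - F z) u w);
    [apply continuousR_minus; [apply continuousR_const | exact HF] | exact Hc |].
  exists P0; intros p Hp; specialize (HP p Hp); lra.
Qed.

Lemma T_invariant_bounded_on_band F chi clo : continuousR F -> (forall z, F (T z) = F z) ->
  exists B, forall z, band chi clo z -> Rabs (F z) <= B.
Proof.
  intros HF HFT. apply NNPP; intro Hunbdd.
  assert (H : forall k : nat, exists z, band chi clo z /\ 0 <= fst z <= 1 /\ INR k < Rabs (F z)).
  { intro k. apply NNPP; intro H. apply Hunbdd. exists (INR k). intros z Hz.
    apply Rnot_lt_le; intro Hlt. destruct (Tk_normalize z) as [j Hj].
    apply H. exists (Tk j z). now rewrite (Tk_invariant F HFT). }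
  destruct (choice _ H) as [u Hu].
  destruct (cluster_exists u 0 1 clo chi) as [w Hw].
  { intro n; destruct (Hu n) as [? [? _]]; now split. }
  destruct (HF w 1 Rlt_0_1) as [d [Hd Hc]].
  destruct (INR_unbounded (Rabs (F w) + 1)) as [N HN].
  destruct (Hw d Hd N) as [p [Hp Hp2]]. rewrite dist2_sym in Hp2.
  specialize (Hc _ Hp2). destruct (Hu p) as [_ [_ Hup]]. apply le_INR in Hp.
  pose proof (Rabs_triang_inv (F (u p)) (F w)). rewrite Rabs_minus_sym in Hc. lra.
Qed.

(* Each stretch of [N] steps gains more than [1/2]; the remainder loses at most [N B]. *)
Lemma drift_of_blocks (G : nat -> R) (N n : nat) (B : R) :
  (1 <= N)%nat -> 0 <= B ->
  (forall i t, (i + t <= n)%nat -> - INR t * B <= G (i + t)%nat - G i) ->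
  (forall i, (i + N <= n)%nat -> 1/2 < G (i + N)%nat - G i) ->
  INR n / INR N - 1 - 2 * INR N * B <= 2 * (G n - G 0%nat).
Proof.
  intros HN HB Hstep Hblock.
  assert (HNpos : 1 <= INR N) by (apply le_INR in HN; exact HN).
  enough (Hclaim : forall t, (t <= n)%nat ->
            INR t / INR N - 1 - 2 * INR N * B <= 2 * (G t - G 0%nat)) by now apply Hclaim.
  intro t; induction t as [t IH] using (well_founded_induction lt_wf); intro Ht.
  destruct (lt_dec t N) as [HtN|HtN].
  - specialize (Hstep 0%nat t Ht). apply lt_INR in HtN. pose proof (pos_INR t).
    assert (INR t / INR N < 1)
      by (apply (Rmult_lt_reg_r (INR N)); [lra|]; unfold Rdiv; rewrite Rmult_assoc, Rinv_l; lra).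
    assert (INR t * B <= INR N * B) by (apply Rmult_le_compat_r; lra).
    simpl in Hstep. lra.
  - specialize (IH (t - N)%nat ltac:(lia) ltac:(lia)).
    specialize (Hblock (t - N)%nat ltac:(lia)).
    replace (t - N + N)%nat with t in Hblock by lia.
    assert (INR t / INR N = INR (t - N) / INR N + 1)
      by (rewrite minus_INR by lia; field; lra).
    lra.
Qed.

Section Band.
Variables (f finv : pt -> pt) (c0 c1 : R).
Hypotheses (Hf : continuous2 f) (Hfinv : continuous2 finv).
Hypotheses (f_K : forall z, finv (f z) = z) (finv_K : forall z, f (finv z) = z).
Hypothesis HfT : forall z, f (T z) = T (f z).
Hypothesis line_c0_below : forall z, hline c0 z -> Uminus c0 (f z).
Hypothesis line_c1_below : forall z, hline c1 z -> Uminus c1 (f z).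
Hypothesis Theta_nonempty : exists z, Theta f finv (band c0 c1) z.
Hypothesis rot_set_pos : forall v, rot_set f finv (Theta f finv (band c0 c1)) v ->
  exists r, v = Fin r /\ 0 < r.

Let A0 := band c0 c1.
Let Th := Theta f finv A0.

Definition drift (N : nat) (z : pt) : R := p1 (Nat.iter N f z) - p1 z.

Lemma continuousR_drift N : continuousR (drift N).
Proof.
  apply continuousR_minus; [apply continuousR_comp, continuous2_iter, Hf|];
    apply continuousR_fst.
Qed.

Lemma drift_T N z : drift N (T z) = drift N z.
Proof. unfold drift, p1. rewrite (iter_T f HfT). simpl; ring. Qed.

Lemma continuousR_snd_fpow n : continuousR (fun z => snd (fpow f finv n z)).
Proof.
  apply continuousR_comp; [exact continuousR_snd|].
  destruct n; [intros z e He; exists e; split; auto | apply continuous2_iter, Hf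
               | apply continuous2_iter, Hfinv].
Qed.

Lemma Theta_fpow n z : Th z -> Th (fpow f finv n z).
Proof.
  intros [Hz Hall]; split; [apply Hall|].
  intro m; rewrite <- fpow_add by assumption; apply Hall.
Qed.

Lemma Theta_iter z i : Th z -> A0 (Nat.iter i f z).
Proof. intros [_ Hall]. rewrite <- (fpow_nat f finv). apply Hall. Qed.

(* In the other alternative [f] would push the whole upper part of the band,
   where the orbit of a point of [Theta] lives, below [c1]. *)
Lemma f_below_c1 w : snd w <= c1 -> snd (f w) < c1.
Proof.
  destruct (half_plane_below_or_above f finv c1 Hf Hfinv f_K finv_K line_c1_below)
    as [Hbelow|Habove].
  - intro Hw; destruct (Rle_lt_or_eq_dec _ _ Hw); [now apply Hbelow | now apply line_c1_below].
  - exfalso. destruct Theta_nonempty as [p [Hp Hall]].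
    specialize (Hall 1%Z); simpl in Hall; unfold band in *.
    destruct (Rle_lt_or_eq_dec c1 (snd p) (proj1 Hp)) as [H|H].
    + specialize (Habove p H); lra.
    + specialize (line_c1_below p (eq_sym H)); unfold Uminus in line_c1_below; lra.
Qed.

(* In the other alternative a point far above the band would have no preimage:
   above [c0] and on [c0] [f] goes below [c0], on the band [snd o f] is bounded,
   and below [c1] [f] stays below [c1]. *)
Lemma f_below_c0 w : snd w <= c0 -> snd (f w) < c0.
Proof.
  destruct (half_plane_below_or_above f finv c0 Hf Hfinv f_K finv_K line_c0_below)
    as [Hbelow|Habove].
  - intro Hw; destruct (Rle_lt_or_eq_dec _ _ Hw); [now apply Hbelow | now apply line_c0_below].
  - exfalso.
    destruct (T_invariant_bounded_on_band (fun z => snd (f z)) c0 c1) as [Bd HBd].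
    { exact (continuousR_comp _ _ continuousR_snd Hf). }
    { intro z; now rewrite HfT. }
    destruct Theta_nonempty as [p [[Hp1 Hp0] _]].
    set (q := (0, Rmax c0 Bd + 1)).
    pose proof (finv_K q) as Hq. set (v := finv q) in Hq.
    pose proof (Rmax_l c0 Bd) as Hmax0; pose proof (Rmax_r c0 Bd) as HmaxB.
    assert (Hsq : snd q = Rmax c0 Bd + 1) by reflexivity.
    destruct (Rlt_le_dec c0 (snd v)) as [Hv|Hv].
    { specialize (Habove v Hv); rewrite Hq in Habove; lra. }
    destruct (Rle_lt_or_eq_dec _ _ Hv) as [Hv'|Hv'].
    2: { specialize (line_c0_below v Hv'); unfold Uminus in line_c0_below.
         rewrite Hq in line_c0_below; lra. }
    destruct (Rle_lt_dec (snd v) c1) as [Hv1|Hv1].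
    + pose proof (f_below_c1 v Hv1) as Hfv; rewrite Hq in Hfv; lra.
    + specialize (HBd v ltac:(unfold band; lra)); rewrite Hq in HBd.
      pose proof (Rle_abs (snd q)); lra.
Qed.

Lemma band_iterates_between z n : A0 z -> A0 (Nat.iter n f z) ->
  forall j, (j <= n)%nat -> A0 (Nat.iter j f z).
Proof.
  unfold A0, band; intros Hz Hn j Hj; split.
  - apply Rnot_lt_le; intro H.
    assert (Hi : forall i, snd (Nat.iter (i + j) f z) < c1)
      by (induction i; simpl; [exact H | apply f_below_c1; lra]).
    specialize (Hi (n - j)%nat). replace (n - j + j)%nat with n in Hi by lia. lra.
  - clear Hj; induction j as [|j IH]; simpl; [lra|]. pose proof (f_below_c0 _ IH); lra.
Qed.

Lemma step_bounded_on_band : exists B, 0 <= B /\ forall z, A0 z -> Rabs (drift 1 z) <= B.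
Proof.
  destruct (T_invariant_bounded_on_band (drift 1) c0 c1 (continuousR_drift 1) (drift_T 1))
    as [B HB].
  exists B; split; [|exact HB].
  destruct Theta_nonempty as [p [Hp _]].
  specialize (HB p Hp). pose proof (Rabs_pos (drift 1 p)); lra.
Qed.

Lemma drift_lower_bound B : (forall z, A0 z -> Rabs (drift 1 z) <= B) ->
  forall t z, (forall i, (i < t)%nat -> A0 (Nat.iter i f z)) -> - INR t * B <= drift t z.
Proof.
  intros HB t; induction t as [|t IH]; intros z Hz; [unfold drift; simpl; lra|].
  specialize (IH z (fun i Hi => Hz i ltac:(lia))).
  specialize (HB _ (Hz t ltac:(lia))).
  pose proof (Rle_abs (- drift 1 (Nat.iter t f z))) as Hle; rewrite Rabs_Ropp in Hle.
  unfold drift in *; rewrite S_INR; simpl Nat.iter in *. lra.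
Qed.

(* A sequence of averages [drift (k+1) / (k+1) <= 1 / (k+1)] along [Theta] would
   accumulate at a non-positive point of the rotation set. *)
Lemma Theta_drift : exists N, (1 <= N)%nat /\ forall z, Th z -> 1 < drift N z.
Proof.
  destruct step_bounded_on_band as [B [HB0 HB]].
  apply NNPP; intro HN.
  assert (H : forall k, exists z, Th z /\ drift (S k) z <= 1).
  { intro k. apply NNPP; intro H. apply HN. exists (S k); split; [lia|].
    intros z Hz. apply Rnot_le_lt; intro. apply H; eauto. }
  destruct (choice _ H) as [u Hu].
  set (r := fun k => drift (S k) (u k) / INR (S k)).
  assert (Hrb : forall k, - B <= r k <= / (INR k + 1)).
  { intro k. destruct (Hu k) as [Hth Hle].
    pose proof (drift_lower_bound B HB (S k) (u k) (fun i _ => Theta_iter _ i Hth)) as Hlo.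
    unfold r; rewrite S_INR in *. pose proof (pos_INR k).
    split; [apply Rmult_le_reg_r with (INR k + 1) | apply Rmult_le_reg_r with (INR k + 1)];
      try lra; unfold Rdiv; rewrite Rmult_assoc, Rinv_l; lra. }
  destruct (Bolzano_Weierstrass r _ (compact_P3 (-B) 1)) as [l Hl].
  { intro k. pose proof (Hrb k). pose proof (Rinv_INR_succ_le k 0 ltac:(lia)).
    simpl in *. rewrite Rplus_0_l, Rinv_1 in *. lra. }
  assert (Hl0 : l <= 0).
  { apply Rnot_lt_le; intro Hpos.
    destruct (Rinv_INR_succ_lt (l/2) ltac:(lra)) as [K HK].
    destruct (ValAdh_eps _ _ Hl (l/2) ltac:(lra) K) as [p [Hp Hp2]].
    pose proof (Rinv_INR_succ_le p K Hp). pose proof (Hrb p).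
    pose proof (Rabs_def2 _ _ Hp2). lra. }
  destruct (rot_set_pos (Fin l)) as [l' [El Hl']].
  { intros m Hm e He.
    destruct (ValAdh_eps _ _ Hl e He m) as [p [Hp Hp2]].
    exists (r p); split; [|exact Hp2].
    exists (S p), (u p). destruct (Hu p) as [Hth _].
    split; [lia|]. split; [exact Hth|]. split; [now apply Theta_fpow|].
    unfold r, drift. now rewrite fpow_nat. }
  injection El; intros; subst; lra.
Qed.

(* Compactness of the band modulo [T]. *)
Lemma drift_near_Theta N : (forall z, Th z -> 1 < drift N z) ->
  exists L : nat, forall z,
    (forall j, (Z.abs j <= Z.of_nat L)%Z -> A0 (fpow f finv j z)) -> 1/2 < drift N z.
Proof.
  intros HTh. apply NNPP; intro HN.
  assert (H : forall L : nat, exists z,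
    (forall j, (Z.abs j <= Z.of_nat L)%Z -> A0 (fpow f finv j z)) /\
    drift N z <= 1/2 /\ 0 <= fst z <= 1).
  { intro L. apply NNPP; intro H. apply HN. exists L. intros z Hz.
    apply Rnot_le_lt; intro Hd. destruct (Tk_normalize z) as [k Hk].
    apply H. exists (Tk k z). split; [|split; [now rewrite (Tk_invariant _ (drift_T N))|exact Hk]].
    intros j Hj. rewrite (Tk_equivariant _ (fpow_T f finv f_K finv_K HfT j)).
    exact (Hz j Hj). }
  destruct (choice _ H) as [u Hu].
  destruct (cluster_exists u 0 1 c1 c0) as [w Hw].
  { intro n. destruct (Hu n) as [Ha [_ Hfst]]. exact (conj Hfst (Ha 0%Z ltac:(lia))). }
  assert (Hall : forall n, A0 (fpow f finv n w)).
  { intro n; split;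
      [apply (cluster_ge (fun z => snd (fpow f finv n z)) u w c1)
      |apply (cluster_le (fun z => snd (fpow f finv n z)) u w c0)];
      try apply continuousR_snd_fpow; try exact Hw;
      exists (Z.abs_nat n); intros p Hp; apply (proj1 (Hu p) n); lia. }
  assert (Hdw : drift N w <= 1/2).
  { apply (cluster_le (drift N) u w); [apply continuousR_drift | exact Hw |].
    exists 0%nat; intros p _; apply (Hu p). }
  specialize (HTh w (conj (Hall 0%Z) Hall)); lra.
Qed.

Lemma drift_of_band_segment B N L :
  0 <= B -> (1 <= N)%nat -> (forall z, A0 z -> Rabs (drift 1 z) <= B) ->
  (forall z, (forall j, (Z.abs j <= Z.of_nat L)%Z -> A0 (fpow f finv j z)) -> 1/2 < drift N z) ->
  forall n z, (L + L <= n)%nat -> A0 z -> A0 (Nat.iter n f z) ->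
  INR (n - L - L) / INR N - 1 - 2 * INR N * B - 4 * INR L * B <= 2 * drift n z.
Proof.
  intros HB0 HN1 HB HL n z H2L Hz Hzn.
  pose proof (band_iterates_between z n Hz Hzn) as Hseg.
  assert (Hstep : forall a t, (a + t <= n)%nat -> - INR t * B <= drift t (Nat.iter a f z)).
  { intros a t Hat. apply (drift_lower_bound B HB). intros i Hi.
    rewrite <- Nat.iter_add. apply Hseg. lia. }
  set (G := fun s => p1 (Nat.iter (L + s) f z)).
  assert (Hblocks : INR (n - L - L) / INR N - 1 - 2 * INR N * B
                    <= 2 * (G (n - L - L)%nat - G 0%nat)).
  { apply drift_of_blocks; [exact HN1 | exact HB0 | |].
    - intros i t Hit. specialize (Hstep (L + i)%nat t ltac:(lia)).
      unfold G, drift in *. now rewrite Nat.add_assoc, Nat.add_comm, Nat.iter_add.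
    - intros i Hi. specialize (HL (Nat.iter (L + i) f z)).
      unfold G, drift in *. rewrite Nat.add_assoc, (Nat.add_comm _ N), Nat.iter_add.
      apply HL; intros j Hj.
      rewrite <- (fpow_nat f finv), <- fpow_add by assumption.
      replace (j + Z.of_nat (L + i))%Z with (Z.of_nat (Z.to_nat (j + Z.of_nat (L + i)))) by lia.
      rewrite (fpow_nat f finv). apply Hseg. lia. }
  pose proof (Hstep 0%nat L ltac:(lia)) as Hhead.
  pose proof (Hstep (n - L)%nat L ltac:(lia)) as Htail.
  unfold G, drift in *. simpl Nat.iter in Hhead.
  rewrite <- Nat.iter_add in Htail.
  replace (L + (n - L))%nat with n in Htail by lia.
  replace (L + (n - L - L))%nat with (n - L)%nat in Hblocks by lia.
  rewrite Nat.add_0_r in Hblocks. lra.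
Qed.

Lemma band_drift M : exists n0 : nat, forall n, (n0 <= n)%nat -> forall z,
  A0 z -> A0 (Nat.iter n f z) -> M < drift n z.
Proof.
  destruct step_bounded_on_band as [B [HB0 HB]].
  destruct Theta_drift as [N [HN1 HN]].
  destruct (drift_near_Theta N HN) as [L HL].
  assert (HNpos : 1 <= INR N) by (apply le_INR in HN1; exact HN1).
  pose proof (pos_INR L).
  set (Q := INR N * (2 * M + 2 + 2 * INR N * B + 4 * INR L * B) + 2 * INR L).
  destruct (INR_unbounded (Rmax Q (2 * INR L))) as [n0 Hn0]. exists n0.
  intros n Hn z Hz Hzn.
  apply le_INR in Hn. pose proof (Rmax_l Q (2 * INR L)); pose proof (Rmax_r Q (2 * INR L)).
  assert (H2L : (L + L <= n)%nat) by (apply INR_le; rewrite plus_INR; lra).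
  pose proof (drift_of_band_segment B N L HB0 HN1 HB HL n z H2L Hz Hzn) as Hdrift.
  rewrite !minus_INR in Hdrift by lia.
  assert (2 * M + 2 + 2 * INR N * B + 4 * INR L * B < (INR n - INR L - INR L) / INR N).
  { apply (Rmult_lt_reg_r (INR N)); [lra|].
    replace ((INR n - INR L - INR L) / INR N * INR N) with (INR n - INR L - INR L) by (field; lra).
    unfold Q in *; lra. }
  lra.
Qed.

End Band.

Theorem lemma6p8
  (f finv : pt -> pt)
  (Hcont : continuous2 f) (Hcontinv : continuous2 finv)
  (Hinv1 : forall z, finv (f z) = z) (Hinv2 : forall z, f (finv z) = z)
  (Hiso : isotopic_to_id f)
  (HT : forall z, f (T z) = T (f z))
  (c0 c1 c2 : R)
  (* (H1) *)
  (H1a : forall z, hline c0 z -> Uplus c1 z)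
  (H1b : forall z, hline c1 z -> Uplus c2 z)
  (H1c0 : forall z, hline c0 z -> Uminus c0 (f z))
  (H1c1 : forall z, hline c1 z -> Uminus c1 (f z))
  (H1c2 : forall z, hline c2 z -> Uminus c2 (f z))
  (* (H2) *)
  (H2 : forall n : nat, (1 <= n)%nat ->
          exists z, hline c0 z /\ hline c2 (fpow f finv (Z.of_nat n) z))
  (* (H3) *)
  (H3ne0 : exists z, Theta f finv (band c0 c1) z)
  (H3ne1 : exists z, Theta f finv (band c1 c2) z)
  (H3rho0 : forall v, rot_set f finv (Theta f finv (band c0 c1)) v ->
              exists r, v = Fin r /\ 0 < r)
  (H3rho1 : forall v, rot_set f finv (Theta f finv (band c1 c2)) v ->
              exists r, v = Fin r /\ r < 0) :
  forall M : R, 0 < M ->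
  exists n0 : nat,
    forall K : pt -> Prop,
      compact2 K ->
      (forall z, K z -> band c0 c1 z) ->
      (forall z w, K z -> K w -> Rabs (p1 z - p1 w) <= M) ->
      forall n : Z, (Z.of_nat n0 <= Z.abs n)%Z ->
        forall z, K z -> ~ K (fpow f finv n z).
Proof.
  intros M HM.
  destruct (band_drift f finv c0 c1 Hcont Hcontinv Hinv1 Hinv2 HT H1c0 H1c1 H3ne0 H3rho0 M)
    as [n0 Hn0].
  exists n0. intros K _ HKband HKdiam n Hn z Hz HKn.
  assert (Hfar : forall v k, (n0 <= k)%nat -> K v -> ~ K (Nat.iter k f v)).
  { intros v k Hk Hv Hkv.
    specialize (Hn0 k Hk v (HKband v Hv) (HKband _ Hkv)).
    specialize (HKdiam _ _ Hkv Hv). unfold drift in Hn0.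
    pose proof (Rle_abs (p1 (Nat.iter k f v) - p1 v)). lra. }
  destruct (Z_le_gt_dec 0 n) as [Hpos|Hneg].
  - apply (Hfar z (Z.to_nat n)); [lia | exact Hz |].
    rewrite <- (fpow_nat f finv), Z2Nat.id by exact Hpos. exact HKn.
  - apply (Hfar (fpow f finv n z) (Z.to_nat (- n))); [lia | exact HKn |].
    rewrite <- (fpow_nat f finv), <- fpow_add by assumption.
    replace (Z.of_nat (Z.to_nat (- n)) + n)%Z with 0%Z by lia. exact Hz.
Qed.
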